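(* Let $P$ be a rooted forest on $[n]$ with natural labeling and let $\mathcal{M}^{\hat\partial}$ be the monoid of maps $\mathcal{L}(P)\to\mathcal{L}(P)$ generated by $\hat\partial_1,\dots,\hat\partial_n$. If $x\in\mathcal{M}^{\hat\partial}$ is idempotent ($x^2=x$), then $\operatorname{Rfactor}(x)=I_x$.
   Context: A rooted forest is a disjoint union of rooted trees, a rooted tree being a connected finite poset in which each element is covered by at most one element. $\mathcal{L}(P)=\{\pi\in S_n : i\prec j \Rightarrow \pi^{-1}_i<\pi^{-1}_j\}$ in one-line notation. $\pi\tau_i$ ($1\le i<n$) swaps $\pi_i,\pi_{i+1}$ if incomparable and is $\pi$ otherwise; $\partial_j=\tau_j\cdots\tau_{n-1}$; $\hat\partial_i$ is defined by $\pi\hat\partial_i=\pi\partial_{\pi^{-1}_i}$. Maps act on the right and compose as $\pi(xy)=(\pi x)y$; the monoid contains the identity. For $x\in\mathcal{M}^{\hat\partial}$: $\operatorname{im}(x)=\{\pi x:\pi\in\mathcal{L}(P)\}$; $\operatorname{rfactor}(x)$ is the longest word $u$ such that every element of $\operatorname{im}(x)$ (as a word $\pi_1\cdots\pi_n$) ends with $u$; $\operatorname{Rfactor}(x)$ is the set of letters of $\operatorname{rfactor}(x)$; $I_x=\{i\in[n]:\hat\partial_i x=x\}$. *)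

From mathcomp Require Import all_boot.
Set Implicit Arguments. Unset Strict Implicit. Unset Printing Implicit Defensive.

(* Labels: the ground set [n] = {1,...,n} is represented by 'I_n = {0,...,n-1}
   (label k+1 of the paper is k here); positions in one-line notation are
   0-based as well. *)

Section Defs.
Variable n : nat.
Variable R : rel 'I_n.  (* R i j  means  i <= j in the poset P *)

Definition is_porder : Prop :=
  reflexive R /\ antisymmetric R /\ transitive R.

Definition plt (i j : 'I_n) : bool := (i != j) && R i j.

Definition covers (i j : 'I_n) : bool :=
  plt i j && [forall k, ~~ (plt i k && plt k j)].

Definition rooted_forest : Prop :=
  forall i : 'I_n, #|[set j | covers i j]| <= 1.

Definition natural_labeling : Prop :=
  forall i j : 'I_n, plt i j -> (i < j)%N.

Definition comparable (a b : 'I_n) : bool := R a b || R b a.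

(* a word (one-line notation) pi_1 ... pi_n as a sequence; pi^{-1}_i is
   index i pi (0-based position) *)
Definition linext (pi : seq 'I_n) : Prop :=
  perm_eq pi (enum 'I_n) /\
  forall i j : 'I_n, plt i j -> (index i pi < index j pi)%N.

(* pi tau_p : swap positions p and p+1 (0-based) if the entries are
   incomparable, otherwise do nothing *)
Fixpoint tau (p : nat) (s : seq 'I_n) : seq 'I_n :=
  match p, s with
  | 0, a :: b :: s' => if comparable a b then s else b :: a :: s'
  | p'.+1, a :: s' => a :: tau p' s'
  | _, _ => s
  end.

(* pi partial_p = pi tau_p tau_{p+1} ... tau_{n-2}  (0-based; this is the
   paper's partial_{p+1} = tau_{p+1} ... tau_{n-1}), maps acting on the right *)
Definition partial (p : nat) (s : seq 'I_n) : seq 'I_n :=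
  foldl (fun t k => tau k t) s (iota p (n.-1 - p)).

Definition hatpartial (i : 'I_n) (s : seq 'I_n) : seq 'I_n :=
  partial (index i s) s.

(* An element of the monoid M^{hatpartial} is given by a word
   [:: i1; ...; ik] standing for hatpartial_{i1} ... hatpartial_{ik}
   (the empty word is the identity); right action: pi (xy) = (pi x) y. *)
Definition act (w : seq 'I_n) (s : seq 'I_n) : seq 'I_n :=
  foldl (fun t i => hatpartial i t) s w.

Definition idempotent_word (w : seq 'I_n) : Prop :=
  forall pi, linext pi -> act w (act w pi) = act w pi.

Definition common_suffix (w u : seq 'I_n) : Prop :=
  forall pi, linext pi -> suffix u (act w pi).

Definition is_rfactor (w u : seq 'I_n) : Prop :=
  common_suffix w u /\
  forall v, common_suffix w v -> (size v <= size u)%N.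

Definition in_I (w : seq 'I_n) (i : 'I_n) : Prop :=
  forall pi, linext pi -> act w (hatpartial i pi) = act w pi.

End Defs.

From Pilot Require Import Defs.
From mathcomp Require Import all_boot zify.
Set Implicit Arguments. Unset Strict Implicit. Unset Printing Implicit Defensive.

(* Write U for the up-set of the letters of x and D for its complement.
   [hatpartial_j] carries j to the position of the next element of the chain
   above j, that one to the next, and so on, the last to the end; it preserves
   the relative order of the letters not above j.  Hence the letters of D
   keep their order under x, and a downward induction on U shows that at a
   fixed point of x (here: any image) the letters of U come last, in an order
   independent of the image.  So x(pi) = pi|D ++ t for a fixed word t, and
   i is in I_x iff [hatpartial_i] never changes pi|D.  This holds for i in U;
   for i in D it holds iff in every image all letters of D after i lie above
   i, which makes i part of the common suffix rfactor(x), and conversely. *)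

Section Before.
Variable T : eqType.
Implicit Types (s t : seq T) (a b x y : T).

Definition before s a b : bool := index a s < index b s.

Lemma before_cons x s a b : a != x -> b != x -> before (x :: s) a b = before s a b.
Proof. by rewrite /before /= eq_sym => /negbTE ->; rewrite eq_sym => /negbTE ->. Qed.

Lemma before_headl x s b : before (x :: s) x b = (x != b).
Proof. by rewrite /before /= eqxx; case: eqP. Qed.

Lemma before_headr x s a : before (x :: s) a x = false.
Proof. by rewrite /before /= eqxx ltn0. Qed.

Lemma before_irr s a : before s a a = false.
Proof. by rewrite /before ltnn. Qed.

Lemma before_flip s a b : a \in s -> b \in s -> a != b ->
  before s a b = ~~ before s b a.
Proof.
move=> ha hb nab; rewrite /before -leqNgt ltn_neqAle.
have -> // : index a s != index b s.
by apply: contra nab => /eqP E; rewrite -(nth_index a ha) E nth_index.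
Qed.

Lemma before_skip x y s a b : a != y -> b != y ->
  before (x :: y :: s) a b = before (x :: s) a b.
Proof.
rewrite /before /= eq_sym => /negbTE ->; rewrite eq_sym => /negbTE ->.
by case: (x == a); case: (x == b).
Qed.

Lemma before_filter (P : pred T) s a b : P a -> P b ->
  before (filter P s) a b = before s a b.
Proof.
move=> Pa Pb; elim: s => [|x s IH] //=.
case Px: (P x); last first.
  by rewrite before_cons //; apply: contraFneq Px => <-.
case: (eqVneq x a) => [<-|xa]; first by rewrite !before_headl.
case: (eqVneq x b) => [<-|xb]; first by rewrite !before_headr.
by rewrite !before_cons 1?eq_sym.
Qed.

Lemma before_catl s t1 t2 a b : (a \in s) || (b \in s) ->
  before (s ++ t1) a b = before (s ++ t2) a b.
Proof.
rewrite /before !index_cat.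
case ha: (a \in s); case hb: (b \in s) => //= _.
- have := index_mem a s; rewrite ha; lia.
- have := index_mem b s; rewrite hb; lia.
Qed.

Lemma before_catr s t a b : a \notin s -> b \notin s ->
  before (s ++ t) a b = before t a b.
Proof. by rewrite /before !index_cat => /negbTE-> /negbTE->; rewrite ltn_add2l. Qed.

Lemma before_cat_notin_mem s t a b : a \notin s -> b \in s ->
  before (s ++ t) a b = false.
Proof.
rewrite /before !index_cat => /negbTE-> hb; rewrite hb.
have := index_mem b s; rewrite hb; lia.
Qed.

Lemma eq_from_before s t : uniq s -> uniq t -> s =i t ->
  {in s &, forall a b, before s a b = before t a b} -> s = t.
Proof.
elim: s t => [|x s IH] [|y t] //=.
- by move=> _ _ /(_ y); rewrite inE eqxx.
- by move=> _ _ /(_ x); rewrite inE eqxx.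
move=> /andP[xs us] /andP[yt ut] Est Hb.
have xy : x = y.
  apply/eqP/negPn/negP=> nxy.
  have yin : y \in x :: s by rewrite Est mem_head.
  by move: (Hb x y (mem_head _ _) yin); rewrite before_headl before_headr nxy.
subst y; congr (_ :: _); apply: IH => // [z|a b ha hb].
  move: (Est z); rewrite !inE.
  by case: (eqVneq z x) => [->|]; rewrite ?(negbTE xs) ?(negbTE yt).
have ax : a != x by apply: contraNneq xs => <-.
have bx : b != x by apply: contraNneq xs => <-.
by move: (Hb a b); rewrite !inE ha hb !orbT !before_cons // => ->.
Qed.

Lemma split_filter_before (P : pred T) s : uniq s ->
  {in s &, forall y z, ~~ P y -> P z -> before s y z} ->
  s = filter (predC P) s ++ filter P s.
Proof.
elim: s => [|x s IH] //= /andP[xs us] H.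
case Px: (P x) => /=.
  have Ps : {in s, forall y, P y}.
    move=> y ys; apply/negPn/negP=> nPy.
    by have := H y x; rewrite !inE eqxx ys orbT before_headr => /(_ isT isT nPy Px).
  rewrite (eq_in_filter (a2 := pred0)) ?filter_pred0; last by move=> y /Ps /= ->.
  by congr (_ :: _); apply/esym/all_filterP/allP => y /Ps.
congr (_ :: _); apply: IH => // y z ys zs nPy Pz.
have yx : y != x by apply: contraNneq xs => <-.
have zx : z != x by apply: contraNneq xs => <-.
by rewrite -(before_cons _ yx zx); apply: H; rewrite // inE ?ys ?zs orbT.
Qed.

Lemma split_at_index x s : x \in s ->
  s = take (index x s) s ++ x :: drop (index x s).+1 s.
Proof.
move=> xs; rewrite -{1}(cat_take_drop (index x s) s).
by rewrite (drop_nth x) ?index_mem ?nth_index.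
Qed.

Lemma catIs : left_injective (@cat T).
Proof.
move=> s s1 s2 E; have /eqP sz : size s1 == size s2.
  by move/(congr1 size)/eqP: E; rewrite !size_cat eqn_add2r.
by move/eqP: E; rewrite eqseq_cat // => /andP[/eqP].
Qed.

Lemma suffix_of_suffixes s t r : suffix t r -> suffix s r -> size s <= size t ->
  suffix s t.
Proof.
move=> /[dup] /size_suffix tr; rewrite !suffixE => /eqP Et /eqP Es st.
by rewrite -Et -Es drop_drop !size_drop; apply/eqP; congr drop; lia.
Qed.

Lemma suffix_same_size s t r : suffix s r -> suffix t r -> size s = size t -> s = t.
Proof. by rewrite !suffixE => /eqP Es /eqP Et st; rewrite -Es -Et st. Qed.

Lemma suffix_mem_head x d u r : uniq r -> suffix (x :: d) r -> suffix u r ->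
  x \in u -> suffix (x :: d) u.
Proof.
move=> ur xdr ur' xu; case: (leqP (size (x :: d)) (size u)) => [le|lt].
  exact: suffix_of_suffixes ur' xdr le.
have ud : suffix u d.
  exact: suffix_of_suffixes (suffix_trans (suffix_cons d x) xdr) ur' _.
move: ur; have /suffixP[A ->] := xdr; rewrite cat_uniq /= => /and3P[_ _ /andP[xd _]].
by rewrite (mem_infix (suffixW ud) xu) in xd.
Qed.
End Before.

Section Forest.
Variables (n : nat) (R : rel 'I_n).
Hypothesis HP : is_porder R.
Hypothesis Hforest : rooted_forest R.
Hypothesis Hnat : natural_labeling R.

Lemma poset_refl a : R a a. Proof. by case: HP => h _; apply: h. Qed.

Lemma poset_trans a b c : R a b -> R b c -> R a c.
Proof. by case: HP => _ [_ h] ab bc; apply: h ab bc. Qed.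

Lemma poset_anti a b : R a b -> R b a -> a = b.
Proof. by case: HP => _ [h _] ab ba; apply: h; rewrite ab ba. Qed.

Lemma pltW a b : plt R a b -> R a b. Proof. by case/andP. Qed.

Lemma plt_neq a b : plt R a b -> a != b. Proof. by case/andP. Qed.

Lemma plt_ltn a b : plt R a b -> a < b. Proof. exact: Hnat. Qed.

Lemma plt_geF a b : plt R a b -> R b a = false.
Proof.
case/andP=> nab ab; apply/negbTE/negP=> ba.
by move: nab; rewrite (poset_anti ab ba) eqxx.
Qed.

Lemma plt_le_trans a b c : plt R a b -> R b c -> plt R a c.
Proof.
move=> ab bc; rewrite /plt (poset_trans (pltW ab) bc) andbT.
by apply: contraTneq bc => <-; rewrite plt_geF.
Qed.

Lemma exists_cover a b : plt R a b -> exists2 c, covers R a c & R c b.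
Proof.
move=> ab; pose P c := plt R a c && R c b.
have Pb : P b by rewrite /P ab poset_refl.
case: (arg_minnP (fun c : 'I_n => val c) Pb) => c /andP[ac cb] cmin.
exists c => //; rewrite /covers ac /=.
apply/forallP=> k; apply/negP=> /andP[ak kc].
have Pk : P k by rewrite /P ak (poset_trans (pltW kc) cb).
by move: (cmin k Pk); rewrite leqNgt plt_ltn.
Qed.

Lemma cover_uniq a c1 c2 : covers R a c1 -> covers R a c2 -> c1 = c2.
Proof.
move=> ac1 ac2; have /card_le1_eqP H := Hforest a.
by apply: H; rewrite inE.
Qed.

(* Both [b] and [c] lie above the unique cover of [a]. *)
Lemma forest_up_comparable a b c : R a b -> R a c -> Defs.comparable R b c.
Proof.
have [k] := ubnP (n - a); elim: k a => [|k IH] a // lt ab ac.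
case: (eqVneq a b) => [<-|nab]; first by rewrite /Defs.comparable ac.
case: (eqVneq a c) => [<-|nac]; first by rewrite /Defs.comparable ab orbT.
have [p1 cp1 p1b] := @exists_cover a b (introT andP (conj nab ab)).
have [p2 cp2 p2c] := @exists_cover a c (introT andP (conj nac ac)).
rewrite -(cover_uniq cp1 cp2) in p2c.
apply: IH p1b p2c; have := plt_ltn (proj1 (andP cp1)); have := ltn_ord p1; lia.
Qed.

End Forest.

Section Bubble.
Variables (n : nat) (R : rel 'I_n).
Hypothesis HP : is_porder R.
Hypothesis Hforest : rooted_forest R.
Hypothesis Hnat : natural_labeling R.

(* [z :: r] acted on by tau_0 ... tau_(size r - 1), see [foldl_tau_bubble]. *)
Fixpoint bubble (z : 'I_n) (r : seq 'I_n) : seq 'I_n :=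
  if r is y :: r' then
    if Defs.comparable R z y then z :: bubble y r' else y :: bubble z r'
  else [:: z].

Definition upper_linext (l : seq 'I_n) : Prop :=
  [/\ uniq l, {in l &, forall a b, plt R a b -> before l a b} &
      forall a b, a \in l -> plt R a b -> b \in l].

Lemma perm_bubble z r : perm_eq (bubble z r) (z :: r).
Proof.
elim: r z => [|y r IH] z //=; case: ifP => _; first by rewrite perm_cons.
apply: (perm_trans (y := y :: z :: r)); first by rewrite perm_cons.
by rewrite (perm_catCA [:: y] [:: z] r).
Qed.

Lemma mem_behead_neq (x : 'I_n) t a : a \in x :: t -> a != x -> a \in t.
Proof. by rewrite inE => /orP[/eqP->|//]; rewrite eqxx. Qed.

Lemma mem_skip_neq (x y : 'I_n) t a : a \in x :: y :: t -> a != y -> a \in x :: t.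
Proof. by rewrite !inE => /orP[->//|/orP[/eqP->|->]]; rewrite ?eqxx ?orbT. Qed.

Lemma upper_linext_comparable z y r : upper_linext (z :: y :: r) ->
  Defs.comparable R z y ->
  [/\ R z y, upper_linext (y :: r) & forall c, R z c -> c != z -> R y c].
Proof.
move=> [U O Up] cmp.
have zy : z != y by move: U => /= /andP[]; rewrite inE negb_or => /andP[].
have zyR : R z y.
  case/orP: cmp => // yz; have pyz : plt R y z by rewrite /plt eq_sym zy yz.
  by move: (O y z); rewrite !inE !eqxx orbT before_headr => /(_ isT isT pyz).
have nz a : a \in y :: r -> a != z by apply: contraTneq => ->; case/andP: U.
split => //; first split.
- by case/andP: U.
- move=> a b ha hb ab; rewrite -(before_cons _ (nz a ha) (nz b hb)).
  by apply: O; rewrite // inE ?ha ?hb orbT.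
- move=> a b ha ab.
  have : b \in z :: y :: r by apply: (Up a); rewrite // inE ha orbT.
  rewrite inE; case: (eqVneq b z) => //= E _; subst b.
  have ha' : a \in z :: y :: r by rewrite inE ha orbT.
  by move: (O a z ha' (mem_head _ _) ab); rewrite before_headr.
move=> c zc cz; case/orP: (forest_up_comparable HP Hforest Hnat zyR zc) => // cy.
case: (eqVneq c y) => [->|ncy]; first exact: poset_refl.
have pzc : plt R z c by rewrite /plt eq_sym cz zc.
have pcy : plt R c y by rewrite /plt ncy cy.
have cin : c \in z :: y :: r by apply: (Up z); rewrite ?inE ?eqxx.
have yin : y \in z :: y :: r by rewrite !inE eqxx orbT.
by move: (O c y cin yin pcy); rewrite before_cons ?before_headr // eq_sym.
Qed.

Lemma upper_linext_incomparable z y r : upper_linext (z :: y :: r) ->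
  ~~ Defs.comparable R z y -> upper_linext (z :: r).
Proof.
move=> [U O Up] ncmp.
have [zy zr yr] : [/\ z != y, z \notin r & y \notin r].
  by move: U => /= /andP[]; rewrite inE negb_or => /andP[-> ->] /andP[-> _].
have ny a : a \in z :: r -> a != y.
  by rewrite inE => /orP[/eqP->//|]; apply: contraTneq => ->.
have skip a : a \in z :: r -> a \in z :: y :: r.
  by rewrite !inE => /orP[->|->]; rewrite ?orbT.
split.
- by move: U => /= /andP[_ /andP[_ ->]]; rewrite andbT.
- move=> a b ha hb ab; rewrite -(before_skip z r (ny a ha) (ny b hb)).
  exact: O (skip a ha) (skip b hb) ab.
move=> a b ha ab; have := Up a b (skip a ha) ab.
rewrite !inE; case: (eqVneq b y) => [E|nby]; last by [].
move=> _; rewrite {}E in ab; move: ha; rewrite inE => /orP[/eqP E|ar].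
  by subst a; move: ncmp; rewrite /Defs.comparable (pltW ab).
have az : a != z by apply: contraTneq ar => ->.
have ain : a \in z :: y :: r by rewrite !inE ar !orbT.
have yin : y \in z :: y :: r by rewrite !inE eqxx orbT.
by have := O a y ain yin ab; rewrite before_cons ?before_headr // eq_sym.
Qed.

Lemma before_bubble_above z r : upper_linext (z :: r) ->
  {in z :: r &, forall a b, R z a -> R z b ->
    before (bubble z r) a b = before (z :: r) a b}.
Proof.
elim: r z => [|y r IH] z L a b ha hb za zb.
  by move: ha hb; rewrite !inE => /eqP-> /eqP->; rewrite !before_irr.
rewrite /=; case: ifP => cmp.
  have [zy Ly above_y] := upper_linext_comparable L cmp.
  case: (eqVneq a z) => [->|az]; first by rewrite !before_headl.
  case: (eqVneq b z) => [->|bz]; first by rewrite !before_headr.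
  rewrite [LHS]before_cons // [RHS]before_cons //.
  apply: (IH y Ly a b); rewrite ?above_y //.
    exact: mem_behead_neq ha az.
  exact: mem_behead_neq hb bz.
have Lz := upper_linext_incomparable L (negbT cmp).
have ay : a != y by apply: contraFneq cmp => <-; rewrite /Defs.comparable za.
have by' : b != y by apply: contraFneq cmp => <-; rewrite /Defs.comparable zb.
rewrite before_cons // before_skip //; apply: (IH z Lz a b) => //.
  exact: mem_skip_neq ha ay.
exact: mem_skip_neq hb by'.
Qed.

Lemma before_bubble_notabove z r : upper_linext (z :: r) ->
  {in z :: r &, forall a b, ~~ R z a -> ~~ R z b ->
    before (bubble z r) a b = before (z :: r) a b}.
Proof.
elim: r z => [|y r IH] z L a b ha hb za zb.
  by move: ha za; rewrite !inE => /eqP->; rewrite poset_refl.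
have az : a != z by apply: contraNneq za => ->; apply: poset_refl.
have bz : b != z by apply: contraNneq zb => ->; apply: poset_refl.
rewrite /=; case: ifP => cmp.
  have [zy Ly _] := upper_linext_comparable L cmp.
  rewrite [LHS]before_cons // [RHS]before_cons //; apply: (IH y Ly a b) => //.
  - exact: mem_behead_neq ha az.
  - exact: mem_behead_neq hb bz.
  - by apply: contra za => ya; exact (poset_trans HP zy ya).
  - by apply: contra zb => yb; exact (poset_trans HP zy yb).
have Lz := upper_linext_incomparable L (negbT cmp).
have yz : y != z by case: L => /= /andP[]; rewrite inE negb_or eq_sym => /andP[].
case: (eqVneq a y) => [->|ay]; first by rewrite before_headl before_cons // before_headl.
case: (eqVneq b y) => [->|by']; first by rewrite before_headr before_cons // before_headr.
rewrite before_cons // before_skip //; apply: (IH z Lz a b) => //.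
  exact: mem_skip_neq ha ay.
exact: mem_skip_neq hb by'.
Qed.

(* A letter above [z] ends up in the position of the next letter of its
   chain, hence before [b] iff one of its successors was. *)
Lemma before_bubble_above_notabove z r : upper_linext (z :: r) ->
  {in z :: r &, forall a b, R z a -> ~~ R z b ->
    before (bubble z r) a b = [exists c, plt R a c && before (z :: r) c b]}.
Proof.
elim: r z => [|y r IH] z L a b ha hb za zb.
  by move: hb zb; rewrite !inE => /eqP->; rewrite poset_refl.
have bz : b != z by apply: contraNneq zb => ->; apply: poset_refl.
have yz : y != z by case: L => /= /andP[]; rewrite inE negb_or eq_sym => /andP[].
rewrite /=; case: ifP => cmp.
  have [zy Ly above_y] := upper_linext_comparable L cmp.
  have yb : y != b by apply: contraNneq zb => <-.
  case: (eqVneq a z) => [->|az].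
    rewrite before_headl eq_sym bz; apply/esym/existsP; exists y.
    by rewrite /plt eq_sym yz zy before_cons // before_headl.
  rewrite before_cons // (IH y Ly a b) ?(above_y a) //.
  - apply: eq_existsb => c; case ac: (plt R a c) => //=.
    have cz : c != z.
      by apply: contraTneq ac => ->; apply/negP => /(plt_geF HP); rewrite za.
    by rewrite [RHS]before_cons.
  - exact: mem_behead_neq ha az.
  - exact: mem_behead_neq hb bz.
  - by apply: contra zb => yRb; exact (poset_trans HP zy yRb).
have Lz := upper_linext_incomparable L (negbT cmp).
have ay : a != y by apply: contraFneq cmp => <-; rewrite /Defs.comparable za.
case: (eqVneq b y) => [->|by'].
  rewrite before_headr; apply/esym/existsP => -[c /andP[ac cy]].
  case: (eqVneq c z) => [E|cz]; first by subst c; rewrite (plt_geF HP ac) in za.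
  by move: cy; rewrite before_cons // before_headr.
rewrite before_cons // (IH z Lz a b) //.
- apply: eq_existsb => c; case ac: (plt R a c) => //=.
  have cy : c != y.
    apply: contraFneq cmp => <-.
    by rewrite /Defs.comparable (poset_trans HP za (pltW ac)).
  by rewrite before_skip.
- exact: mem_skip_neq ha ay.
- exact: mem_skip_neq hb by'.
Qed.

End Bubble.

Section Hatpartial.
Variables (n : nat) (R : rel 'I_n).
Hypothesis HP : is_porder R.
Hypothesis Hforest : rooted_forest R.
Hypothesis Hnat : natural_labeling R.

Lemma tau_cat p (s t : seq 'I_n) : tau R (size s + p) (s ++ t) = s ++ tau R p t.
Proof. by elim: s => [|x s IH] //=; rewrite IH. Qed.

Lemma foldl_tau_bubble (s : seq 'I_n) z r :
  foldl (fun t k => tau R k t) (s ++ z :: r) (iota (size s) (size r)) =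
  s ++ bubble R z r.
Proof.
elim: r s z => [|y r IH] s z //=.
have := tau_cat 0 s [:: z, y & r]; rewrite addn0 => -> /=.
by case: ifP => _; [have := IH (rcons s z) y | have := IH (rcons s y) z];
  rewrite size_rcons cat_rcons => ->; rewrite -cats1 -catA.
Qed.

Lemma linext_uniq s : linext R s -> uniq s.
Proof. by case=> /perm_uniq -> _; apply: enum_uniq. Qed.

Lemma linext_mem s a : linext R s -> a \in s.
Proof. by case=> /perm_mem -> _; rewrite mem_enum. Qed.

Lemma linext_size s : linext R s -> size s = n.
Proof. by case=> /perm_size -> _; rewrite size_enum_ord. Qed.

Lemma linext_before s a b : linext R s -> plt R a b -> before s a b.
Proof. by case=> _; apply. Qed.

Lemma linext_before_le s a b : linext R s -> R a b -> a != b -> before s a b.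
Proof. by move=> Ls ab nab; apply: linext_before; rewrite // /plt nab ab. Qed.

Lemma eq_filter_linext (P : pred 'I_n) s t : linext R s -> linext R t ->
  {in P &, forall a b, before s a b = before t a b} -> filter P s = filter P t.
Proof.
move=> Ls Lt st; apply: eq_from_before.
- by rewrite filter_uniq // (linext_uniq Ls).
- by rewrite filter_uniq // (linext_uniq Lt).
- by move=> x; rewrite !mem_filter (linext_mem _ Ls) (linext_mem _ Lt).
move=> a b; rewrite !mem_filter => /andP[Pa _] /andP[Pb _].
by rewrite !before_filter // st.
Qed.

Lemma linext_before_comparable s a b : linext R s -> Defs.comparable R a b ->
  a != b -> before s a b = R a b.
Proof.
move=> Ls /orP[ab|ba] nab; first by rewrite linext_before_le.
have pba : plt R b a by rewrite /plt eq_sym nab.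
by rewrite before_flip ?(linext_mem _ Ls) // linext_before // plt_geF.
Qed.

Lemma eq_filter_chain (P : pred 'I_n) s t : linext R s -> linext R t ->
  {in P &, forall a b, Defs.comparable R a b} -> filter P s = filter P t.
Proof.
move=> Ls Lt chainP; apply: eq_filter_linext => // a b Pa Pb.
case: (eqVneq a b) => [->|ab]; first by rewrite !before_irr.
by rewrite (linext_before_comparable Ls) ?(linext_before_comparable Lt) ?chainP.
Qed.

Lemma linext_enum : linext R (enum 'I_n).
Proof. by split=> // a b ab; rewrite !index_enum_ord; apply: Hnat. Qed.

Section OneStep.
Variables (s : seq 'I_n) (i : 'I_n).
Hypothesis Ls : linext R s.
Let p := index i s.
Let pre := take p s.
Let r := drop p.+1 s.

Let p_lt : p < size s. Proof. by rewrite index_mem (linext_mem i Ls). Qed.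

Let s_split : s = pre ++ i :: r. Proof. exact/split_at_index/linext_mem. Qed.

Lemma hatpartialE : hatpartial R i s = pre ++ bubble R i r.
Proof.
rewrite /hatpartial /partial -/p.
have szpre : size pre = p by rewrite size_take p_lt.
have -> : n.-1 - p = size r by move: p_lt; rewrite size_drop (linext_size Ls); lia.
by rewrite {1}s_split -szpre foldl_tau_bubble.
Qed.

Let notin_pre a : a \notin pre -> a \in i :: r.
Proof. by move=> ap; have := linext_mem a Ls; rewrite {1}s_split mem_cat (negbTE ap). Qed.

Let disjoint_pre a : a \in i :: r -> a \notin pre.
Proof.
by move: (linext_uniq Ls); rewrite {1}s_split cat_uniq => /and3P[_ /hasPn H _]; apply: H.
Qed.

Let mem_pre a : (a \in pre) = (index a s < p).
Proof.
have szpre : size pre = p by rewrite size_take p_lt.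
rewrite {1}s_split index_cat szpre.
case: ifP => [apre|_]; last by rewrite ltnNge leq_addr.
by rewrite -szpre index_mem.
Qed.

Let above_notin_pre a : R i a -> a \notin pre.
Proof.
move=> ia; rewrite mem_pre -leqNgt.
case: (eqVneq i a) => [<-//|nia].
exact/ltnW/(linext_before_le Ls).
Qed.

Let before_tail a b : a \notin pre -> b \notin pre -> before s a b = before (i :: r) a b.
Proof. by move=> ha hb; rewrite {1}s_split before_catr. Qed.

Let upper_linext_tail : upper_linext R (i :: r).
Proof.
split.
- by move: (linext_uniq Ls); rewrite {1}s_split cat_uniq => /and3P[].
- move=> a b ha hb ab; rewrite -before_tail ?disjoint_pre //.
  exact: linext_before.
move=> a b ha ab; apply: notin_pre; move: (disjoint_pre ha).
rewrite !mem_pre -!leqNgt => pa; apply: (leq_trans pa); apply: ltnW.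
exact: linext_before Ls ab.
Qed.

Lemma perm_hatpartial : perm_eq (hatpartial R i s) s.
Proof. by rewrite hatpartialE {1}s_split perm_cat2l perm_bubble. Qed.

Lemma before_hatpartial_above a b : R i a -> R i b ->
  before (hatpartial R i s) a b = before s a b.
Proof.
move=> ia ib; have ap := above_notin_pre ia; have bp := above_notin_pre ib.
rewrite hatpartialE before_catr // before_tail //.
by apply: (before_bubble_above HP Hforest Hnat upper_linext_tail); rewrite ?notin_pre.
Qed.

Lemma before_hatpartial_notabove a b : ~~ R i a -> ~~ R i b ->
  before (hatpartial R i s) a b = before s a b.
Proof.
move=> ia ib; rewrite hatpartialE.
case: (boolP ((a \in pre) || (b \in pre))) => [abpre|].
  by rewrite {1}s_split; apply: before_catl.
rewrite negb_or => /andP[ap bp]; rewrite before_catr // before_tail //.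
by apply: (before_bubble_notabove HP Hforest Hnat upper_linext_tail); rewrite ?notin_pre.
Qed.

Lemma before_hatpartial_above_notabove a b : R i a -> ~~ R i b ->
  before (hatpartial R i s) a b = [exists c, plt R a c && before s c b].
Proof.
move=> ia ib; have ap := above_notin_pre ia.
have cp c : plt R a c -> c \notin pre.
  by move=> ac; apply: above_notin_pre; exact: (poset_trans HP ia (pltW ac)).
rewrite hatpartialE; case: (boolP (b \in pre)) => bp.
  rewrite before_cat_notin_mem //; apply/esym/existsP => -[c /andP[ac cb]].
  by move: cb; rewrite {1}s_split before_cat_notin_mem ?cp.
rewrite before_catr //.
rewrite (before_bubble_above_notabove HP Hforest Hnat upper_linext_tail) ?notin_pre //.
apply: eq_existsb => c; case ac: (plt R a c) => //=.
by rewrite before_tail // cp.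
Qed.

Lemma linext_hatpartial : linext R (hatpartial R i s).
Proof.
split; first by apply: (perm_trans perm_hatpartial); case: Ls.
move=> a b ab; change (before (hatpartial R i s) a b).
have mem_hat x : x \in hatpartial R i s by rewrite (perm_mem perm_hatpartial) linext_mem.
case: (boolP (R i a)) => ia; case: (boolP (R i b)) => ib.
- by rewrite before_hatpartial_above // linext_before.
- by move: ib; rewrite (poset_trans HP ia (pltW ab)).
- rewrite before_flip ?mem_hat ?(plt_neq ab) // before_hatpartial_above_notabove //.
  apply/negP=> /existsP[c /andP[bc cb]].
  have ac := plt_le_trans HP ab (pltW bc).
  move: (linext_before Ls ac); rewrite before_flip ?linext_mem ?(plt_neq ac) //.
  by rewrite cb.
- by rewrite before_hatpartial_notabove // linext_before.
Qed.

End OneStep.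

Lemma linext_act w s : linext R s -> linext R (act R w s).
Proof. by elim: w s => [|j w IH] s //= Ls; apply/IH/linext_hatpartial. Qed.

End Hatpartial.

(* Downward induction on the up-set of the letters of a word [w]: [good] holds
   above them at any fixed point of [w], since the letter [j] can only break
   [good] above [j], where it restores it from the values strictly above. *)
Section FixedPointInduction.
Variables (n : nat) (R : rel 'I_n).
Hypothesis HP : is_porder R.
Hypothesis Hnat : natural_labeling R.
Variables (S : Type) (step : 'I_n -> S -> S) (inv : S -> Prop).
Variables (good : S -> 'I_n -> Prop) (Q : pred 'I_n).
Hypothesis step_inv : forall j s, Q j -> inv s -> inv (step j s).
Hypothesis step_good_notabove : forall j s z, Q j -> inv s -> ~~ R j z ->
  good s z -> good (step j s) z.
Hypothesis step_good_above : forall j s a, Q j -> inv s -> R j a ->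
  (forall c, plt R a c -> good s c) -> good (step j s) a.

Definition steps (w : seq 'I_n) (s : S) : S := foldl (fun t j => step j t) s w.

Definition good_above s z := forall c, R z c -> good s c.

Lemma good_above_step j s z : Q j -> inv s -> good_above s z -> good_above (step j s) z.
Proof.
move=> Qj Is H c zc; case: (boolP (R j c)) => jc; last exact/step_good_notabove/H.
apply: step_good_above => // c' cc'; apply: H.
exact: (poset_trans HP zc (pltW cc')).
Qed.

Lemma good_above_steps w s z : all Q w -> inv s -> good_above s z ->
  good_above (steps w s) z.
Proof.
elim: w s => [|j w IH] s //= /andP[Qj Qw] Is H.
by apply: IH; [| apply: step_inv | apply: good_above_step].
Qed.

Lemma good_above_step_reflect j s : Q j -> inv s ->
  (forall z, good_above (step j s) z -> good_above s z) ->
  forall a, R j a -> good_above s a.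
Proof.
move=> Qj Is back a; have [k] := ubnP (n - a); elim: k a => [|k IH] a // lt ja.
apply: back => c ac; case: (eqVneq a c) => [<-|nac].
  apply: step_good_above => // c' ac'.
  have lt' : n - c' < k by have := plt_ltn Hnat ac'; have := ltn_ord c'; lia.
  exact: (IH c' lt' (poset_trans HP ja (pltW ac')) c' (poset_refl HP c')).
have pac : plt R a c by rewrite /plt nac.
have lt' : n - c < k by have := plt_ltn Hnat pac; have := ltn_ord c; lia.
exact: (good_above_step Qj Is (IH c lt' (poset_trans HP ja ac))) (poset_refl HP c).
Qed.

Lemma good_above_steps_reflect w s : all Q w -> inv s ->
  (forall z, good_above (steps w s) z -> good_above s z) ->
  forall j a, j \in w -> R j a -> good_above s a.
Proof.
elim: w s => [|j w IH] s //= /andP[Qj Qw] Is back.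
have Is' := step_inv Qj Is.
have back1 z : good_above (step j s) z -> good_above s z.
  by move/(good_above_steps Qw Is'); apply: back.
move=> j' a; rewrite inE => /orP[/eqP->|j'w] ja.
  exact: good_above_step_reflect Qj Is back1 a ja.
apply/back1/(IH (step j s) Qw Is' _ j' a j'w ja) => z.
by move/back/(good_above_step Qj Is).
Qed.

Lemma fixed_good_above w s : all Q w -> inv s -> steps w s = s ->
  forall j a, j \in w -> R j a -> good_above s a.
Proof. by move=> Qw Is Fs; apply: good_above_steps_reflect => // z; rewrite Fs. Qed.

End FixedPointInduction.

Section FixedPoints.
Variables (n : nat) (R : rel 'I_n).
Hypothesis HP : is_porder R.
Hypothesis Hforest : rooted_forest R.
Hypothesis Hnat : natural_labeling R.
Variable w : seq 'I_n.

Definition upset (y : 'I_n) : bool := has (fun j => R j y) w.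

Lemma mem_upset j a : j \in w -> R j a -> upset a.
Proof. by move=> jw ja; apply/hasP; exists j. Qed.

Lemma upset_le a b : upset a -> R a b -> upset b.
Proof. by case/hasP=> j jw ja ab; apply: mem_upset jw (poset_trans HP ja ab). Qed.

Lemma before_act_notabove v s a b : linext R s ->
  (forall j, j \in v -> ~~ R j a /\ ~~ R j b) ->
  before (act R v s) a b = before s a b.
Proof.
elim: v s => [|j v IH] s //= Ls H.
have [ja jb] := H j (mem_head _ _).
rewrite IH; [exact: before_hatpartial_notabove | exact: linext_hatpartial |].
by move=> j' j'v; apply: H; rewrite inE j'v orbT.
Qed.

Let all_w : all (mem w) w. Proof. exact/allP. Qed.

Lemma fixed_notup_before_up s a y : linext R s -> act R w s = s ->
  upset a -> ~~ upset y -> before s y a.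
Proof.
move=> Ls Fs /hasP[j jw ja] nVy.
pose good s z := forall y, ~~ upset y -> before s y z.
suff: good_above R good s a by move/(_ a (poset_refl HP a)); apply.
apply: (fixed_good_above HP Hnat (step := hatpartial R) _ _ _ all_w Ls Fs jw ja).
- by move=> j' s' _; apply: linext_hatpartial.
- move=> j' s' z j'w L nz G y' nVy'.
  rewrite before_hatpartial_notabove ?G //.
  by apply: contra nVy'; apply: mem_upset j'w.
move=> j' s' a' j'w L ja' G y' nVy'.
have Va' := mem_upset j'w ja'.
have ny : ~~ R j' y' by apply: contra nVy'; apply: mem_upset j'w.
have ya : y' != a' by apply: contraNneq nVy' => ->.
have Lh : linext R (hatpartial R j' s') by exact: linext_hatpartial.
rewrite before_flip ?(linext_mem _ Lh) // before_hatpartial_above_notabove //.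
apply/negP=> /existsP[c /andP[ac cy]].
have yc : y' != c by apply: contraNneq nVy' => ->; apply: upset_le Va' (pltW ac).
by have := G c ac y' nVy'; rewrite before_flip ?(linext_mem _ L) // cy.
Qed.

Lemma steps_pair v s t :
  steps (fun j st => (hatpartial R j st.1, hatpartial R j st.2)) v (s, t) =
  (act R v s, act R v t).
Proof. by elim: v s t => [|j v IH] s t //=; rewrite -IH. Qed.

Lemma fixed_up_before s t a y : linext R s -> linext R t ->
  act R w s = s -> act R w t = t ->
  upset a -> y != a -> before s a y = before t a y.
Proof.
move=> Ls Lt Fs Ft /hasP[j jw ja] ya.
pose good (st : seq 'I_n * seq 'I_n) z :=
  forall y, y != z -> before st.1 z y = before st.2 z y.
pose step j (st : seq 'I_n * seq 'I_n) := (hatpartial R j st.1, hatpartial R j st.2).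
have Fst : steps step w (s, t) = (s, t) by rewrite steps_pair Fs Ft.
suff: good_above R good (s, t) a by move/(_ a (poset_refl HP a)); apply.
apply: (fixed_good_above HP Hnat (inv := fun st => linext R st.1 /\ linext R st.2)
  _ _ _ all_w (conj Ls Lt : linext R (s, t).1 /\ _) Fst jw ja).
- by move=> j' [s' t'] _ [L1 L2]; split; apply: linext_hatpartial.
- move=> j' [s' t'] z j'w [L1 L2] nz G y' yz /=.
  have L1h : linext R (hatpartial R j' s') by exact: linext_hatpartial.
  have L2h : linext R (hatpartial R j' t') by exact: linext_hatpartial.
  case: (boolP (R j' y')) => jy; last by rewrite !before_hatpartial_notabove //; apply: G.
  rewrite before_flip ?(linext_mem _ L1h) 1?eq_sym //.
  rewrite [RHS]before_flip ?(linext_mem _ L2h) 1?eq_sym //.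
  rewrite !before_hatpartial_above_notabove //; congr negb.
  apply: eq_existsb => c; case yc: (plt R y' c) => //=.
  have cz : c != z by apply: contraNneq nz => <-; exact: (poset_trans HP jy (pltW yc)).
  rewrite before_flip ?(linext_mem _ L1) // [RHS]before_flip ?(linext_mem _ L2) //.
  by rewrite (G c).
- move=> j' [s' t'] a' j'w [L1 L2] ja' G y' ya' /=.
  case: (boolP (R j' y')) => jy.
    have cmp := forest_up_comparable HP Hforest Hnat ja' jy.
    by rewrite !before_hatpartial_above // !(linext_before_comparable HP) // eq_sym.
  rewrite !before_hatpartial_above_notabove //.
  apply: eq_existsb => c; case ac: (plt R a' c) => //=.
  apply: G => //; apply: contraNneq jy => ->.
  exact: (poset_trans HP ja' (pltW ac)).
Qed.

End FixedPoints.

Section Idempotent.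
Variables (n : nat) (R : rel 'I_n).
Hypothesis HP : is_porder R.
Hypothesis Hforest : rooted_forest R.
Hypothesis Hnat : natural_labeling R.
Variable w : seq 'I_n.
Hypothesis Hidem : idempotent_word R w.

Local Notation up := (upset R w).
Local Notation down := (predC (upset R w)).

(* By [actE], every image of [w] ends with [up_tail]. *)
Definition up_tail : seq 'I_n := filter up (act R w (enum 'I_n)).

Lemma linext_act_enum : linext R (act R w (enum 'I_n)).
Proof. exact/linext_act/linext_enum. Qed.

Lemma actE p : linext R p -> act R w p = filter down p ++ up_tail.
Proof.
move=> Lp; set s := act R w p.
have Ls : linext R s by apply: linext_act.
have Fs : act R w s = s := Hidem Lp.
have L0 := linext_act_enum; have F0 := Hidem (linext_enum Hnat).
rewrite {1}(split_filter_before (P := up) (linext_uniq Ls)); last first.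
  by move=> y z _ _ ny vz; exact: (fixed_notup_before_up HP Hforest Hnat Ls Fs vz ny).
congr (_ ++ _); apply: (eq_filter_linext (R := R)) => // a b.
  move=> Da Db; rewrite before_act_notabove // => j jw.
  by split; [move: Da | move: Db]; apply: contra; apply: mem_upset.
move=> Va Vb; case: (eqVneq b a) => [->|ba]; first by rewrite !before_irr.
exact: (fixed_up_before HP Hforest Hnat Ls L0 Fs F0 Va ba).
Qed.

Lemma in_I_filter_down i : in_I R w i <->
  (forall p, linext R p -> filter down (hatpartial R i p) = filter down p).
Proof.
split=> H p Lp; have Lh : linext R (hatpartial R i p) by apply: linext_hatpartial.
  by apply: (@catIs _ up_tail); rewrite -!actE //; apply: H.
by rewrite !actE // H.
Qed.

Lemma filter_down_hatpartial_up i p : up i -> linext R p ->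
  filter down (hatpartial R i p) = filter down p.
Proof.
move=> Vi Lp; have Lh : linext R (hatpartial R i p) by apply: linext_hatpartial.
apply: (eq_filter_linext (R := R)) => // a b Da Db.
rewrite before_hatpartial_notabove //.
  by apply: contra Da; apply: upset_le.
by apply: contra Db; apply: upset_le.
Qed.

Lemma rfactor_split u : is_rfactor R w u ->
  exists2 v, u = v ++ up_tail & forall p, linext R p -> suffix v (filter down p).
Proof.
case=> cs umax; have L0 := linext_enum Hnat.
have cs0 : common_suffix R w up_tail by move=> p Lp; rewrite actE // suffix_suffix.
have /suffixP[v Eu] := suffix_of_suffixes (cs _ L0) (cs0 _ L0) (umax _ cs0).
subst u.
by exists v => // p Lp; have := cs p Lp; rewrite actE // suffix_catl // eqxx.
Qed.

Lemma mem_rfactor_up u i : is_rfactor R w u -> up i -> i \in u.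
Proof.
move=> /rfactor_split[v -> _] Vi.
by rewrite mem_cat mem_filter Vi (linext_mem _ linext_act_enum) orbT.
Qed.

(* The letters of [filter down p] from [i] on form a suffix of it, which
   [hatpartial R i] only permutes; it lies inside any common suffix [v]
   containing [i], so it is left unchanged. *)
Lemma filter_down_hatpartial_suffix v i p : ~~ up i -> i \in v ->
  (forall q, linext R q -> suffix v (filter down q)) -> linext R p ->
  filter down (hatpartial R i p) = filter down p.
Proof.
move=> Di iv Hv Lp; have Lh : linext R (hatpartial R i p) by apply: linext_hatpartial.
pose pre := take (index i p) p; pose r := drop (index i p).+1 p.
have Ed : filter down (i :: r) = i :: filter down r by rewrite /= Di.
have szg : size (filter down (bubble R i r)) = size (filter down (i :: r)).
  exact/perm_size/perm_filter/perm_bubble.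
have Ep : filter down p = filter down pre ++ filter down (i :: r).
  by rewrite {1}(split_at_index (linext_mem i Lp)) filter_cat.
have Eh : filter down (hatpartial R i p) = filter down pre ++ filter down (bubble R i r).
  by rewrite hatpartialE // filter_cat.
have dv : suffix (filter down (i :: r)) v.
  rewrite Ed; apply: (suffix_mem_head _ _ (Hv p Lp) iv).
    by rewrite filter_uniq // (linext_uniq Lp).
  by rewrite Ep Ed suffix_suffix.
have gv : suffix (filter down (bubble R i r)) v.
  apply: suffix_of_suffixes (Hv _ Lh) _ _; first by rewrite Eh suffix_suffix.
  by rewrite szg size_suffix.
by rewrite Eh Ep (suffix_same_size gv dv szg).
Qed.

Section FixedLetter.
Variable i : 'I_n.
Hypothesis Hi : in_I R w i.
Hypothesis Di : ~~ up i.

Local Notation above_i := (predI (R i) down).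

(* If a letter [b] of a fixed point followed [i] without being above it, then
   the last-labelled letter above [i] before [b] would be carried past [b]
   by [hatpartial R i], changing the order of [filter down]. *)
Lemma fixed_in_I_after s b : linext R s -> act R w s = s -> down b ->
  before s i b -> R i b.
Proof.
move=> Ls Fs Db ib; apply/negPn/negP => nib.
pose Q := [pred a | down a && R i a && before s a b].
have Qi : Q i by rewrite /= Di poset_refl.
case: (arg_maxnP (fun a : 'I_n => val a) Qi) => M /andP[/andP[DM iM] Mb] Mmax.
have : before (hatpartial R i s) M b.
  by rewrite -(before_filter _ DM Db) (proj1 (in_I_filter_down i) Hi s Ls) before_filter.
rewrite before_hatpartial_above_notabove // => /existsP[c /andP[Mc cb]].
have ic : R i c := poset_trans HP iM (pltW Mc).
have Dc : down c.
  apply/negP => /= Vc; have bc := fixed_notup_before_up HP Hforest Hnat Ls Fs Vc Db.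
  have nbc : b != c by apply: contraNneq Db => ->.
  by move: bc; rewrite before_flip ?(linext_mem _ Ls) // cb.
have Qc : Q c by apply/andP; split; first exact/andP.
by have /= := Mmax c Qc; rewrite leqNgt (plt_ltn Hnat Mc).
Qed.

Lemma suffix_above_fixed s : linext R s -> act R w s = s ->
  suffix (filter above_i s) (filter down s).
Proof.
move=> Ls Fs; rewrite filter_predI.
rewrite [X in suffix _ X](split_filter_before (P := R i)) ?suffix_suffix //.
  by rewrite filter_uniq // (linext_uniq Ls).
move=> y z; rewrite !mem_filter => /andP[Dy _] /andP[Dz _] iy iz.
rewrite before_filter //; apply/negPn/negP => nyz.
have zy : before s z y.
  by rewrite before_flip ?(linext_mem _ Ls) //; apply: contraNneq iy => <-.
have iz' : index i s <= index z s.
  by case: (eqVneq i z) => [<-//|nz]; exact/ltnW/(linext_before_le Ls iz nz).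
by move: iy; rewrite (fixed_in_I_after Ls Fs Dy (leq_ltn_trans iz' zy)).
Qed.

Lemma common_suffix_above :
  common_suffix R w (filter above_i (act R w (enum 'I_n)) ++ up_tail).
Proof.
move=> p Lp; set s := act R w p.
have Ls : linext R s by apply: linext_act.
have Fs : act R w s = s := Hidem Lp.
rewrite -Fs (actE Ls) suffix_catl // eqxx /=.
have -> : filter above_i (act R w (enum 'I_n)) = filter above_i s.
  apply: (eq_filter_chain HP linext_act_enum Ls) => a b /andP[ia _] /andP[ib _].
  exact: (forest_up_comparable HP Hforest Hnat ia ib).
exact: suffix_above_fixed.
Qed.

End FixedLetter.

Lemma mem_rfactor_in_I u i : is_rfactor R w u -> in_I R w i -> i \in u.
Proof.
case: (boolP (up i)) => [Vi Hu _|Di [cs umax] Hi]; first exact: mem_rfactor_up.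
have L0 := linext_enum Hnat; have csa := common_suffix_above Hi Di.
have := suffix_of_suffixes (cs _ L0) (csa _ L0) (umax _ csa).
move/suffixW/mem_infix; apply.
by rewrite mem_cat mem_filter /= (poset_refl HP) Di (linext_mem _ linext_act_enum).
Qed.

Lemma in_I_mem_rfactor u i : is_rfactor R w u -> i \in u -> in_I R w i.
Proof.
move=> Hu iu; apply/in_I_filter_down => p Lp.
case: (boolP (up i)) => [Vi|Di]; first exact: filter_down_hatpartial_up.
have [v Eu Hv] := rfactor_split Hu.
apply: (filter_down_hatpartial_suffix Di _ Hv Lp).
by move: iu; rewrite Eu mem_cat mem_filter (negbTE Di) orbF.
Qed.

End Idempotent.

Theorem lemma6p7 (n : nat) (R : rel 'I_n)
    (HP : is_porder R) (Hforest : rooted_forest R) (Hnat : natural_labeling R)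
    (w : seq 'I_n) (Hidem : idempotent_word R w)
    (u : seq 'I_n) (Hu : is_rfactor R w u) :
  forall i : 'I_n, i \in u <-> in_I R w i.
Proof.
move=> i; split.
  exact: (in_I_mem_rfactor HP Hforest Hnat Hidem Hu).
exact: (mem_rfactor_in_I HP Hforest Hnat Hidem Hu).
Qed.
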